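(* Let $T$ be an order tree of height at most $\omega_1$ and $G$ a sparse $T$-graph. Then all the pairwise disjoint horizontal rays $R_t$ ($t\in T$) of the ray inflation $G\sharp\mathbb{N}$ belong to the same end $\varepsilon$, which is the only end of $G\sharp\mathbb{N}$; in particular $\deg(\varepsilon)=|T|$.
   Context: An order tree is a partial order $(T,\le)$ with a unique minimal element (the root) in which every set $\{t' : t'\le t\}$ is well-ordered; the height of $t$ is the order type of $\{t' : t'<t\}$; the height of $T$ is the supremum of the order types of its maximal chains. $t$ is a successor of $t'$ (its predecessor) if $t'<t$ with nothing strictly between; otherwise $t$ is a limit. A $T$-graph is a graph $G$ with $V(G)=T$ whose edges join comparable points and in which for every $t$ the neighbours of $t$ below $t$ (its down-neighbours) are cofinal in $\{s : s<t\}$. $G$ is sparse if the set of down-neighbours of each $t$ has order type $\mathrm{cf}(\{s : s<t\})$; for height at most $\omega_1$, this means a successor's only down-neighbour is its predecessor and a non-root limit's down-neighbours form a cofinal $\omega$-sequence below it. The ray inflation $G\sharp\mathbb{N}$ has vertex set $T\times\mathbb{N}$ and edges: $(t,n)(t,n+1)$ for all $t,n$ (so $R_t$, the subgraph on $\{t\}\times\mathbb{N}$, is a ray, the horizontal ray); $(t,n)(t',n)$ for all $n$ if $t$ is a successor with predecessor $t'$; $(t,n)(t_n,n)$ for all $n$ if $t$ is a non-root limit with down-neighbours $t_0<t_1<\cdots$. Ends are equivalence classes of rays, two rays being equivalent if there are infinitely many disjoint paths between them; the degree of an end is the maximum number of disjoint rays in it. *)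

From Stdlib Require Import List.
Import ListNotations.
Set Implicit Arguments.

Section Trees.
Variable T : Type.
Variable le : T -> T -> Prop.

Definition lt (s t : T) : Prop := le s t /\ s <> t.

Definition well_ordered_on (P : T -> Prop) : Prop :=
  (forall x y, P x -> P y -> le x y \/ le y x) /\
  (forall Q : T -> Prop, (exists x, P x /\ Q x) ->
     exists m, P m /\ Q m /\ forall y, P y -> Q y -> le m y).

Definition minimal (r : T) : Prop := forall s, le s r -> s = r.

Definition order_tree : Prop :=
  (forall x, le x x) /\
  (forall x y, le x y -> le y x -> x = y) /\
  (forall x y z, le x y -> le y z -> le x z) /\
  (exists r, minimal r /\ forall r', minimal r' -> r' = r) /\
  (forall t, well_ordered_on (fun s => le s t)).

Definition is_root (r : T) : Prop := minimal r.

Definition countable_set (P : T -> Prop) : Prop :=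
  exists f : T -> nat, forall x y, P x -> P y -> f x = f y -> x = y.

(* height at most omega_1: every maximal chain has order type <= omega_1,
   equivalently every strict down-set {s | s < t} (a well-order) has
   countable order type, i.e. is countable. *)
Definition height_le_omega1 : Prop :=
  forall t, countable_set (fun s => lt s t).

Definition pred_of (t' t : T) : Prop :=
  lt t' t /\ ~ (exists u, lt t' u /\ lt u t).

Definition is_successor (t : T) : Prop := exists t', pred_of t' t.
Definition nonroot_limit (t : T) : Prop := ~ is_root t /\ ~ is_successor t.

Variable G : T -> T -> Prop.

Definition simple_graph {V : Type} (E : V -> V -> Prop) : Prop :=
  (forall x y, E x y -> E y x) /\ (forall x, ~ E x x).

Definition down_nb (s t : T) : Prop := lt s t /\ G s t.

Definition T_graph : Prop :=
  simple_graph G /\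
  (forall s t, G s t -> le s t \/ le t s) /\
  (forall s t, lt s t -> exists u, le s u /\ lt u t /\ down_nb u t).

Definition omega_enum_down_nb (t : T) (f : nat -> T) : Prop :=
  (forall n, lt (f n) (f (S n))) /\
  (forall s, down_nb s t <-> exists n, s = f n).

(* sparse T-graph, in the form stated for trees of height at most omega_1:
   a successor's only down-neighbour is its predecessor, and a non-root
   limit's down-neighbours form a cofinal omega-sequence below it
   (cofinality follows from the T-graph condition). *)
Definition sparse : Prop :=
  (forall t p, pred_of p t -> forall s, down_nb s t <-> s = p) /\
  (forall t, nonroot_limit t -> exists f, omega_enum_down_nb t f).

Definition infl_edge0 (x y : T * nat) : Prop :=
  let (t, n) := x in let (t', m) := y in
  (t' = t /\ m = S n) \/
  (m = n /\ pred_of t' t) \/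
  (m = n /\ nonroot_limit t /\
     exists f, omega_enum_down_nb t f /\ t' = f n).

Definition ray_inflation (x y : T * nat) : Prop :=
  infl_edge0 x y \/ infl_edge0 y x.

Definition horizontal_ray (t : T) : nat -> T * nat := fun n => (t, n).

End Trees.

Section Ends.
Variable V : Type.
Variable E : V -> V -> Prop.

Definition is_ray (r : nat -> V) : Prop :=
  (forall m n, r m = r n -> m = n) /\ (forall n, E (r n) (r (S n))).

Inductive walk : V -> V -> list V -> Prop :=
| walk_one x : walk x x [x]
| walk_cons x y z l : E x y -> walk y z l -> walk x z (x :: l).

Definition is_path (x y : V) (l : list V) : Prop := walk x y l /\ NoDup l.

Definition ray_equiv (r1 r2 : nat -> V) : Prop :=
  exists P : nat -> list V,
    (forall k, exists a b, is_path (r1 a) (r2 b) (P k)) /\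
    (forall k k', k <> k' -> forall v, In v (P k) -> ~ In v (P k')).

Definition disjoint_family {I : Type} (F : I -> nat -> V) : Prop :=
  forall i j, i <> j -> forall m n, F i m <> F j n.

(* the end of the ray r0 has degree |A|: the maximum number of disjoint rays
   in it is |A| (there is a family of |A| disjoint rays in it, and every
   family of disjoint rays in it injects into A) *)
Definition end_degree_is (r0 : nat -> V) (A : Type) : Prop :=
  (exists F : A -> nat -> V,
     (forall a, is_ray (F a) /\ ray_equiv (F a) r0) /\ disjoint_family F) /\
  (forall (I : Type) (F : I -> nat -> V),
     (forall i, is_ray (F i) /\ ray_equiv (F i) r0) -> disjoint_family F ->
     exists g : I -> A, forall i j, g i = g j -> i = j).
End Ends.

(** Each level [T × {n}] of [G♯ℕ] is connected: from any [(t, n)] one descends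
    within the level to [(root, n)], stepping from a successor to its
    predecessor and from a limit [t] to its down-neighbour [t_n], and the
    descent terminates because the tree is well-founded.  Given a finite set
    [S] of vertices, a ray has a vertex [(s, m)] such that no [(s, k)] with
    [m <= k] lies in [S]; it climbs [R_s] above every level meeting [S] and
    crosses over to any [R_t] there.  Infinitely many disjoint such paths
    exist, so every ray is equivalent to every [R_t].

    The [R_t] are [|T|] disjoint rays.  Conversely, a disjoint family of rays
    injects into [T × ℕ] through first vertices, and [|T × ℕ| = |T|] for
    infinite [T] (Zorn); for finite [T], all the rays of a finite subfamily
    cross one common level, at distinct vertices. *)

From Stdlib Require Import Arith List Lia Classical ClassicalEpsilon FinFun Cantor.
From mathcomp Require classical_sets.
Import ListNotations.
Set Implicit Arguments.

Lemma le_list_max n l : In n l -> n <= list_max l.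
Proof.
  revert n. apply Forall_forall, (list_max_le l (list_max l)), le_n.
Qed.

Lemma inj_nat_escapes {V} (f : nat -> V) : Injective f ->
  forall L : list V, exists a, ~ In (f a) L.
Proof.
  intros Hf L. apply not_all_not_ex. intros Hall.
  assert (Hincl : incl (map f (seq 0 (S (length L)))) L).
  { intros v Hv. apply in_map_iff in Hv. destruct Hv as [a [<- _]]. apply NNPP, Hall. }
  pose proof (NoDup_incl_length (Injective_map_NoDup Hf (seq_NoDup _ 0)) Hincl) as Hlen.
  rewrite length_map, length_seq in Hlen. lia.
Qed.

Fixpoint greedy {A} (pick : list A -> list A) (k : nat) : list A :=
  match k with
  | 0 => []
  | S k => greedy pick k ++ pick (greedy pick k)
  end.

Lemma greedy_incl {A} (pick : list A -> list A) k k' :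
  k < k' -> incl (pick (greedy pick k)) (greedy pick k').
Proof.
  induction k' as [|k' IH]; intros Hk; [lia|]. simpl.
  destruct (Nat.eq_dec k k') as [->|Hne]; [apply incl_appr, incl_refl|].
  apply incl_appl, IH. lia.
Qed.

Lemma greedy_disjoint {A} (pick : list A -> list A) :
  (forall S v, In v (pick S) -> ~ In v S) ->
  forall k k', k <> k' ->
  forall v, In v (pick (greedy pick k)) -> ~ In v (pick (greedy pick k')).
Proof.
  intros Hfresh k k' Hne v Hv Hv'.
  destruct (Nat.lt_gt_cases k k') as [[Hlt|Hlt] _]; [exact Hne|..].
  - exact (Hfresh _ v Hv' (greedy_incl pick Hlt v Hv)).
  - exact (Hfresh _ v Hv (greedy_incl pick Hlt v Hv')).
Qed.

Lemma inj_nat_of_unbounded {X} (P : X -> Prop) :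
  (forall l : list X, exists x, P x /\ ~ In x l) ->
  exists e : nat -> X, Injective e /\ forall k, P (e k).
Proof.
  intros Hunb. destruct (choice _ Hunb) as [p Hp].
  pose (pick := fun l => [p l]).
  exists (fun k => p (greedy pick k)). split; [|intros k; apply Hp].
  intros k k' Hkk'. apply NNPP. intros Hne.
  apply (greedy_disjoint pick) with k k' (p (greedy pick k)); [|exact Hne|left; auto|].
  - intros S v [<-|[]]. apply Hp.
  - rewrite Hkk'. left; auto.
Qed.

Lemma nodup_cover_of_bounded {I} (n : nat) :
  (forall li : list I, NoDup li -> length li <= n) ->
  exists li : list I, NoDup li /\ forall i, In i li.
Proof.
  intros Hb.
  assert (Hgrow : forall d (li : list I), NoDup li -> n - length li <= d ->
            exists li', NoDup li' /\ forall i : I, In i li').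
  { induction d as [|d IH]; intros li Hli Hd;
      (destruct (classic (forall i, In i li)) as [Hall|Hmiss]; [eauto|]);
      apply not_all_ex_not in Hmiss; destruct Hmiss as [i Hi];
      pose proof (Hb (i :: li) (NoDup_cons i Hi Hli)) as Hlen; simpl in Hlen.
    - lia.
    - apply (IH (i :: li)); [constructor; auto | simpl; lia]. }
  apply (Hgrow n []); [constructor | simpl; lia].
Qed.

Lemma inj_of_bounded_nodup {I X} (lx : list X) : NoDup lx ->
  (forall li : list I, NoDup li -> length li <= length lx) ->
  exists g : I -> X, Injective g.
Proof.
  intros Hlx Hb. destruct (nodup_cover_of_bounded Hb) as [li [Hli Hcov]].
  assert (Hslot : forall i, exists x, exists k,
            nth_error li k = Some i /\ nth_error lx k = Some x).
  { intros i. destruct (In_nth_error _ _ (Hcov i)) as [k Hk].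
    assert (Hklx : k < length lx).
    { pose proof (Hb li Hli). assert (k < length li) by (apply nth_error_Some; congruence).
      lia. }
    destruct (nth_error lx k) as [x|] eqn:Hx; [eauto|].
    apply nth_error_None in Hx. lia. }
  destruct (choice _ Hslot) as [g Hg]. exists g. intros i j Hij.
  destruct (Hg i) as [k [Hki Hkx]], (Hg j) as [k' [Hk'j Hk'x]].
  rewrite Hij in Hkx.
  assert (k = k') as <-.
  { apply (proj1 (NoDup_nth_error lx) Hlx); [apply nth_error_Some|]; congruence. }
  congruence.
Qed.

Section NatAbsorption.
Variable X : Type.

Definition graph_dom (R : X * nat * X -> Prop) (a : X) : Prop :=
  exists n y, R (a, n, y).

(* [R] is the graph of an injection [graph_dom R × ℕ -> graph_dom R]. *)
Record absorbs_nat (R : X * nat * X -> Prop) : Prop := {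
  absorbs_total : forall {a} n, graph_dom R a -> exists y, R (a, n, y);
  absorbs_functional : forall {a n y y'}, R (a, n, y) -> R (a, n, y') -> y = y';
  absorbs_injective : forall {a n a' n' y},
    R (a, n, y) -> R (a', n', y) -> a = a' /\ n = n';
  absorbs_closed : forall {a n y}, R (a, n, y) -> graph_dom R y }.

Lemma absorbs_nat_chain (F : (X * nat * X -> Prop) -> Prop) :
  (forall R, F R -> absorbs_nat R) ->
  (forall R R', F R -> F R' -> (forall z, R z -> R' z) \/ (forall z, R' z -> R z)) ->
  absorbs_nat (fun z => exists2 R, F R & R z).
Proof.
  intros HF Htot. split.
  - intros a n [m [y [R HR Hz]]].
    destruct (absorbs_total (HF R HR) (a := a) n) as [y' Hy']; [exists m, y; exact Hz|].
    exists y', R; assumption.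
  - intros a n y y' [R HR Hz] [R' HR' Hz'].
    destruct (Htot R R' HR HR') as [Hs|Hs].
    + exact (absorbs_functional (HF R' HR') (Hs _ Hz) Hz').
    + exact (absorbs_functional (HF R HR) Hz (Hs _ Hz')).
  - intros a n a' n' y [R HR Hz] [R' HR' Hz'].
    destruct (Htot R R' HR HR') as [Hs|Hs].
    + exact (absorbs_injective (HF R' HR') (Hs _ Hz) Hz').
    + exact (absorbs_injective (HF R HR) Hz (Hs _ Hz')).
  - intros a n y [R HR Hz].
    destruct (absorbs_closed (HF R HR) Hz) as [m [y' Hy']].
    exists m, y', R; assumption.
Qed.

Lemma absorbs_nat_union R1 R2 : absorbs_nat R1 -> absorbs_nat R2 ->
  (forall a, graph_dom R1 a -> ~ graph_dom R2 a) ->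
  absorbs_nat (fun z => R1 z \/ R2 z).
Proof.
  intros H1 H2 Hdisj.
  assert (Hdom : forall R a n y, R (a, n, y) -> graph_dom R a) by (intros; do 2 eexists; eauto).
  split.
  - intros a n [m [y [Hz|Hz]]].
    + destruct (absorbs_total H1 n (Hdom _ _ _ _ Hz)) as [y' Hy']. exists y'; left; exact Hy'.
    + destruct (absorbs_total H2 n (Hdom _ _ _ _ Hz)) as [y' Hy']. exists y'; right; exact Hy'.
  - intros a n y y' [Hz|Hz] [Hz'|Hz'].
    + exact (absorbs_functional H1 Hz Hz').
    + destruct (Hdisj a); eapply Hdom; eauto.
    + destruct (Hdisj a); eapply Hdom; eauto.
    + exact (absorbs_functional H2 Hz Hz').
  - intros a n a' n' y [Hz|Hz] [Hz'|Hz'].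
    + exact (absorbs_injective H1 Hz Hz').
    + destruct (Hdisj y); [eapply absorbs_closed|eapply absorbs_closed]; eauto.
    + destruct (Hdisj y); [eapply absorbs_closed|eapply absorbs_closed]; eauto.
    + exact (absorbs_injective H2 Hz Hz').
  - intros a n y [Hz|Hz].
    + destruct (absorbs_closed H1 Hz) as [m [y' Hy']]. exists m, y'; left; exact Hy'.
    + destruct (absorbs_closed H2 Hz) as [m [y' Hy']]. exists m, y'; right; exact Hy'.
Qed.

Definition enum_graph (e : nat -> X) (z : X * nat * X) : Prop :=
  exists k n, z = (e k, n, e (to_nat (k, n))).

Lemma absorbs_nat_enum_graph e : Injective e -> absorbs_nat (enum_graph e).
Proof.
  intros He. split.
  - intros a n [m [y [k [m' Hz]]]]. injection Hz as -> _ _.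
    exists (e (to_nat (k, n))), k, n. reflexivity.
  - intros a n y y' [k [m Hz]] [k' [m' Hz']].
    injection Hz as Ha -> ->. injection Hz' as Ha' <- ->.
    rewrite Ha in Ha'. apply He in Ha'. subst. reflexivity.
  - intros a n a' n' y [k [m Hz]] [k' [m' Hz']].
    injection Hz as -> -> ->. injection Hz' as -> -> Hy.
    apply He, (to_nat_inj (k, m) (k', m')) in Hy. injection Hy as -> ->. split; reflexivity.
  - intros a n y [k [m Hz]]. injection Hz as _ _ ->.
    exists 0, (e (to_nat (to_nat (k, m), 0))), (to_nat (k, m)), 0. reflexivity.
Qed.

Lemma maximal_absorbs_nat_cofinite R : absorbs_nat R ->
  (forall R', absorbs_nat R' -> (forall z, R z -> R' z) -> forall z, R' z -> R z) ->
  exists L, forall x, ~ graph_dom R x -> In x L.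
Proof.
  intros HR Hmax. apply NNPP. intros Hfin.
  assert (Hunb : forall l, exists x, ~ graph_dom R x /\ ~ In x l).
  { intros l. apply NNPP. intros Hno. apply Hfin. exists l. intros x Hx.
    apply NNPP. intros Hxl. apply Hno. exists x. split; assumption. }
  destruct (inj_nat_of_unbounded _ Hunb) as [e [He HeR]].
  assert (HR' : absorbs_nat (fun z => R z \/ enum_graph e z)).
  { apply absorbs_nat_union; [exact HR | exact (absorbs_nat_enum_graph He)|].
    intros a HaR [m [y [k [n Hz]]]]. injection Hz as -> _ _. exact (HeR k HaR). }
  apply (HeR 0). exists 0, (e (to_nat (0, 0))).
  apply (Hmax _ HR' (fun z Hz => or_introl Hz)). right. exists 0, 0. reflexivity.
Qed.

(* The cofinitely many points outside [graph_dom R] are coded along the odd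
   slots of one point [a0] of the domain; the domain uses the even slots. *)
Lemma absorbs_nat_cofinite_inj R (L : list X) a0 : absorbs_nat R ->
  graph_dom R a0 -> (forall x, ~ graph_dom R x -> In x L) ->
  exists g : X * nat -> X, Injective g.
Proof.
  intros HR Ha0 HL.
  pose (code := fun (p : X * nat) (y : X) =>
    let (x, n) := p in
    (graph_dom R x -> R (x, 2 * n, y)) /\
    (~ graph_dom R x -> exists k, nth_error L k = Some x /\
                                  R (a0, S (2 * to_nat (k, n)), y))).
  assert (Hcode : forall p, exists y, code p y).
  { intros [x n]. destruct (classic (graph_dom R x)) as [Hx|Hx].
    - destruct (absorbs_total HR (2 * n) Hx) as [y Hy]. exists y. split; tauto.
    - destruct (In_nth_error _ _ (HL x Hx)) as [k Hk].
      destruct (absorbs_total HR (S (2 * to_nat (k, n))) Ha0) as [y Hy].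
      exists y. split; [tauto|]. intros _. exists k. split; assumption. }
  destruct (choice _ Hcode) as [g Hg]. exists g.
  intros [x n] [x' n'] Hxx'.
  destruct (Hg (x, n)) as [Hd Hnd], (Hg (x', n')) as [Hd' Hnd'].
  rewrite <- Hxx' in Hd', Hnd'.
  destruct (classic (graph_dom R x)) as [Hx|Hx], (classic (graph_dom R x')) as [Hx'|Hx'].
  - destruct (absorbs_injective HR (Hd Hx) (Hd' Hx')) as [-> Hn].
    f_equal. lia.
  - destruct (Hnd' Hx') as [k' [_ Hk']].
    destruct (absorbs_injective HR (Hd Hx) Hk'). lia.
  - destruct (Hnd Hx) as [k [_ Hk]].
    destruct (absorbs_injective HR Hk (Hd' Hx')). lia.
  - destruct (Hnd Hx) as [k [Hkx Hk]], (Hnd' Hx') as [k' [Hkx' Hk']].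
    destruct (absorbs_injective HR Hk Hk') as [_ Hc].
    assert (Hkn : (k, n) = (k', n')) by (apply to_nat_inj; lia).
    injection Hkn as <- <-. f_equal. congruence.
Qed.

Theorem inj_prod_nat_of_infinite : (forall l : list X, exists x, ~ In x l) ->
  exists g : X * nat -> X, Injective g.
Proof.
  intros Hinf.
  destruct (@classical_sets.Zorn_bigcup _ absorbs_nat) as [R [HR Hmax]].
  { intros F HF Htot. exact (absorbs_nat_chain _ HF Htot). }
  destruct (maximal_absorbs_nat_cofinite HR) as [L HL].
  { intros R' HR' Hsub z Hz. apply NNPP. intros Hnz.
    apply (Hmax R'); [split; [exact Hsub | intros Hsub'; exact (Hnz (Hsub' z Hz))] | exact HR']. }
  destruct (Hinf L) as [a0 Ha0].
  apply (@absorbs_nat_cofinite_inj R L a0 HR); [|exact HL].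
  apply NNPP. intros Hn. exact (Ha0 (HL a0 Hn)).
Qed.

End NatAbsorption.

Section Walks.
Variables (V : Type) (E : V -> V -> Prop).

Definition walk_in (P : V -> Prop) (x y : V) : Prop :=
  exists l, walk E x y l /\ forall v, In v l -> P v.

Lemma walk_head x y l : walk E x y l -> In x l.
Proof. intros Hw; destruct Hw; left; reflexivity. Qed.

Lemma walk_in_refl (P : V -> Prop) x : P x -> walk_in P x x.
Proof.
  intros Hx. exists [x]. split; [constructor|]. intros v [<-|[]]; exact Hx.
Qed.

Lemma walk_in_cons (P : V -> Prop) x y z : P x -> E x y -> walk_in P y z -> walk_in P x z.
Proof.
  intros Hx Hxy [l [Hw Hl]]. exists (x :: l). split; [econstructor; eauto|].
  intros v [<-|Hv]; auto.
Qed.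

Lemma walk_in_edge (P : V -> Prop) x y : P x -> P y -> E x y -> walk_in P x y.
Proof. intros Hx Hy Hxy. apply walk_in_cons with y; auto using walk_in_refl. Qed.

Lemma walk_in_trans (P : V -> Prop) x y z : walk_in P x y -> walk_in P y z -> walk_in P x z.
Proof.
  intros [l [Hw Hl]]. revert Hl.
  induction Hw as [x|x y z' l Hxy Hw IH]; intros Hl Hyz; [exact Hyz|].
  apply walk_in_cons with y; [apply Hl; left; reflexivity | exact Hxy|].
  apply IH; [intros v Hv; apply Hl; right; exact Hv | exact Hyz].
Qed.

Lemma walk_in_sym (P : V -> Prop) : (forall x y, E x y -> E y x) ->
  forall x y, walk_in P x y -> walk_in P y x.
Proof.
  intros Hsym x y [l [Hw Hl]]. revert Hl.
  induction Hw as [x|x y z l Hxy Hw IH]; intros Hl.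
  - apply walk_in_refl, Hl. left; reflexivity.
  - apply walk_in_trans with y; [apply IH; intros v Hv; apply Hl; right; exact Hv|].
    apply walk_in_edge; [apply Hl; right; eapply walk_head; eauto | apply Hl; left; reflexivity |].
    apply Hsym, Hxy.
Qed.

Lemma walk_in_weaken (P Q : V -> Prop) x y :
  (forall v, P v -> Q v) -> walk_in P x y -> walk_in Q x y.
Proof. intros HPQ [l [Hw Hl]]. exists l. split; [exact Hw | intros v Hv; apply HPQ, Hl, Hv]. Qed.

Lemma walk_suffix y z l1 x l2 : walk E y z (l1 ++ x :: l2) -> walk E x z (x :: l2).
Proof.
  revert y. induction l1 as [|a l1 IH]; intros y Hw; simpl in Hw; inversion Hw; subst.
  - constructor.
  - econstructor; eauto.
  - destruct l1; discriminate.
  - eapply IH; eauto.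
Qed.

Lemma walk_to_path x y l : walk E x y l -> exists l', is_path E x y l' /\ incl l' l.
Proof.
  intros Hw. induction Hw as [x|x y z l Hxy Hw IH].
  - exists [x]. split; [split; [constructor | repeat constructor; simpl; tauto] | apply incl_refl].
  - destruct IH as [l' [[Hw' Hnd] Hincl]].
    destruct (classic (In x l')) as [Hx|Hx].
    + apply in_split in Hx. destruct Hx as [l1 [l2 ->]].
      exists (x :: l2). split; [split|].
      * eapply walk_suffix; eauto.
      * exact (NoDup_app_remove_l _ _ Hnd).
      * intros v Hv. right. apply Hincl, in_or_app. right. exact Hv.
    + exists (x :: l'). split; [split; [econstructor; eauto | constructor; auto] |].
      apply incl_cons; [left; reflexivity | apply incl_tl, Hincl].
Qed.

Lemma ray_equiv_of_avoiding_walks (r1 r2 : nat -> V) :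
  (forall S : list V, exists a b, walk_in (fun v => ~ In v S) (r1 a) (r2 b)) ->
  ray_equiv E r1 r2.
Proof.
  intros Havoid.
  assert (Hpath : forall S : list V, exists l,
            (exists a b, is_path E (r1 a) (r2 b) l) /\ forall v, In v l -> ~ In v S).
  { intros S. destruct (Havoid S) as [a [b [l [Hw Hl]]]].
    destruct (walk_to_path Hw) as [l' [Hp Hincl]].
    exists l'. split; [eauto | intros v Hv; apply Hl, Hincl, Hv]. }
  destruct (choice _ Hpath) as [pick Hpick].
  exists (fun k => pick (greedy pick k)). split.
  - intros k. apply Hpick.
  - apply greedy_disjoint. intros S. apply Hpick.
Qed.

End Walks.

Section RayInflation.
Variables (T : Type) (le G : T -> T -> Prop).
Local Notation H := (ray_inflation le G).

Lemma ray_inflation_sym x y : H x y -> H y x.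
Proof. unfold ray_inflation. tauto. Qed.

Lemma ray_inflation_level_step x y : H x y -> snd y <= S (snd x) /\ snd x <= S (snd y).
Proof.
  destruct x as [t n], y as [t' m]. unfold ray_inflation, infl_edge0; simpl.
  intros [[[_ ->]|[[-> _]|[-> _]]]|[[_ ->]|[[-> _]|[-> _]]]]; lia.
Qed.

Lemma horizontal_ray_is_ray t : is_ray H (horizontal_ray t).
Proof.
  split.
  - intros m n Hmn. injection Hmn as Hmn. exact Hmn.
  - intros n. left. simpl. left. split; reflexivity.
Qed.

Lemma horizontal_rays_disjoint : disjoint_family (@horizontal_ray T).
Proof. intros t t' Htt' m n Heq. injection Heq as Heq _. exact (Htt' Heq). Qed.

Lemma horizontal_walk s m k :
  walk_in H (fun v => fst v = s /\ m <= snd v) (s, m) (s, k + m).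
Proof.
  induction k as [|k IH]; [apply walk_in_refl; simpl; split; [reflexivity | lia]|].
  apply walk_in_trans with (s, k + m); [exact IH|].
  apply walk_in_edge; simpl; [split; [reflexivity | lia] .. |].
  left. simpl. left. split; reflexivity.
Qed.

(* A ray through a finite tree must leave the finitely many vertices below level [N + 1],
   and it changes level by at most one per edge. *)
Lemma ray_reaches_level (LT : list T) : (forall x, In x LT) ->
  forall rho, is_ray H rho -> forall N, snd (rho 0) <= N -> exists a, snd (rho a) = N.
Proof.
  intros HLT rho [Hinj Hedge] N H0.
  destruct (inj_nat_escapes Hinj (list_prod LT (seq 0 (S N)))) as [a Ha].
  assert (Hhigh : N < snd (rho a)).
  { destruct (rho a) as [s m]. simpl. apply Nat.nle_gt. intros Hm.
    apply Ha, in_prod; [apply HLT | apply in_seq; lia]. }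
  clear Ha. induction a as [|a IH]; [lia|].
  destruct (le_lt_dec (snd (rho a)) N) as [Hm|Hm]; [|exact (IH Hm)].
  exists a. pose proof (ray_inflation_level_step (Hedge a)). lia.
Qed.

Lemma disjoint_rays_length_bound (LT : list T) : (forall x, In x LT) ->
  forall (I : Type) (F : I -> nat -> T * nat),
  (forall i, is_ray H (F i)) -> disjoint_family F ->
  forall li : list I, NoDup li -> length li <= length LT.
Proof.
  intros HLT I F Hray Hdisj li Hli.
  set (N := list_max (map (fun i => snd (F i 0)) li)).
  assert (Hhit : forall i, exists a, In i li -> snd (F i a) = N).
  { intros i. destruct (classic (In i li)) as [Hi|Hi]; [|exists 0; tauto].
    assert (Hstart : snd (F i 0) <= N) by apply le_list_max, (in_map (fun i => snd (F i 0))), Hi.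
    destruct (ray_reaches_level _ HLT (Hray i) Hstart) as [a Ha].
    exists a. intros _. exact Ha. }
  destruct (choice _ Hhit) as [h Hh].
  assert (Hnd : NoDup (map (fun i => fst (F i (h i))) li)).
  { apply NoDup_map_NoDup_ForallPairs; [|exact Hli].
    intros i j Hi Hj Heq. apply NNPP. intros Hne.
    apply (Hdisj i j Hne (h i) (h j)), injective_projections; [exact Heq|].
    rewrite (Hh i Hi), (Hh j Hj). reflexivity. }
  pose proof (NoDup_incl_length Hnd (fun x _ => HLT x)) as Hlen.
  rewrite length_map in Hlen. exact Hlen.
Qed.

Lemma disjoint_rays_inj (I : Type) (F : I -> nat -> T * nat) :
  (forall i, is_ray H (F i)) -> disjoint_family F -> exists g : I -> T, Injective g.
Proof.
  intros Hray Hdisj.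
  destruct (classic (exists LT : list T, forall x, In x LT)) as [[LT HLT]|Hinf].
  - pose (dec := fun x y : T => excluded_middle_informative (x = y)).
    apply (inj_of_bounded_nodup (NoDup_nodup dec LT)).
    apply (disjoint_rays_length_bound (nodup dec LT)) with F; [|exact Hray | exact Hdisj].
    intros x. apply nodup_In, HLT.
  - destruct (@inj_prod_nat_of_infinite T) as [g Hg].
    { intros l. apply not_all_not_ex. intros Hl. apply Hinf. exists l. intros x. apply NNPP, Hl. }
    exists (fun i => g (F i 0)). intros i j Hij. apply NNPP. intros Hne.
    exact (Hdisj i j Hne 0 0 (Hg _ _ Hij)).
Qed.

Hypotheses (OT : order_tree le) (SP : sparse le G).

Lemma order_tree_lt_wf : well_founded (lt le).
Proof.
  destruct OT as [Hrefl [Hanti [Htrans [_ Hwo]]]].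
  intros t. apply NNPP. intros HnA.
  destruct (proj2 (Hwo t) (fun s => ~ Acc (lt le) s)) as [m [Hmt [Hm Hleast]]];
    [exists t; split; [apply Hrefl | exact HnA]|].
  apply Hm. constructor. intros y [Hym Hne]. apply NNPP. intros Hy.
  apply Hne, Hanti; [exact Hym|]. apply Hleast; [eapply Htrans; eauto | exact Hy].
Qed.

Lemma level_walk_to_root : exists r, forall u n, walk_in H (fun v => snd v = n) (u, n) (r, n).
Proof.
  destruct OT as [_ [_ [_ [[r [_ Hroot]] _]]]]. exists r.
  intros u n. induction u as [u IH] using (well_founded_ind order_tree_lt_wf).
  destruct (classic (minimal le u)) as [Hmin|Hnr].
  { rewrite (Hroot u Hmin). apply walk_in_refl. reflexivity. }
  destruct (classic (is_successor le u)) as [[p Hp]|Hns].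
  - apply walk_in_cons with (p, n); [reflexivity | | apply IH, Hp].
    left. simpl. right. left. split; [reflexivity | exact Hp].
  - destruct (proj2 SP u (conj Hnr Hns)) as [f Hf].
    assert (Hdown : down_nb le G (f n) u) by (apply (proj2 Hf); eauto).
    apply walk_in_cons with (f n, n); [reflexivity | | apply IH, Hdown].
    left. simpl. right. right. split; [reflexivity|]. split; [exact (conj Hnr Hns)|].
    exists f. split; [exact Hf | reflexivity].
Qed.

Lemma level_connected u v n : walk_in H (fun x => snd x = n) (u, n) (v, n).
Proof.
  destruct level_walk_to_root as [r Hr].
  apply walk_in_trans with (r, n); [apply Hr|].
  apply walk_in_sym; [exact ray_inflation_sym | apply Hr].
Qed.

Lemma ray_walk_avoiding rho : is_ray H rho ->
  forall t (K : list (T * nat)), exists a b, walk_in H (fun v => ~ In v K) (rho a) (t, b).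
Proof.
  intros [Hinj _] t K.
  set (M := S (list_max (map snd K))).
  assert (HK : forall v, In v K -> snd v < M).
  { intros v Hv. apply le_n_S, le_list_max, in_map, Hv. }
  destruct (inj_nat_escapes Hinj (list_prod (map fst K) (seq 0 M))) as [a Ha].
  destruct (rho a) as [s m] eqn:Hrho.
  exists a, (M + m). rewrite Hrho.
  apply walk_in_trans with (s, M + m).
  - apply walk_in_weaken with (P := fun v => fst v = s /\ m <= snd v); [|apply horizontal_walk].
    intros [s' k] [Hs Hk] HvK. simpl in Hs, Hk. subst s'.
    pose proof (HK _ HvK) as HkM. simpl in HkM.
    apply Ha. apply in_prod; [apply (in_map fst K (s, k)), HvK | apply in_seq; lia].
  - apply walk_in_weaken with (P := fun v => snd v = M + m); [|apply level_connected].
    intros v Hv HvK. pose proof (HK v HvK). lia.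
Qed.

Lemma ray_equiv_horizontal rho : is_ray H rho -> forall t, ray_equiv H rho (horizontal_ray t).
Proof.
  intros Hrho t. apply ray_equiv_of_avoiding_walks. intros K.
  exact (ray_walk_avoiding Hrho t K).
Qed.

End RayInflation.

Theorem lemma6p2 (T : Type) (le : T -> T -> Prop) (G : T -> T -> Prop) :
  order_tree le -> height_le_omega1 le -> T_graph le G -> sparse le G ->
  let H := ray_inflation le G in
  (* the horizontal rays are pairwise disjoint rays, all in the same end *)
  (forall t, is_ray H (horizontal_ray t)) /\
  (forall t t', ray_equiv H (horizontal_ray t) (horizontal_ray t')) /\
  (* this end is the only end *)
  (forall r, is_ray H r -> forall t, ray_equiv H r (horizontal_ray t)) /\
  (* its degree is |T| *)
  (forall t, end_degree_is H (horizontal_ray t) T).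
Proof.
  intros OT _ _ SP; cbv zeta.
  pose proof (ray_equiv_horizontal OT SP) as Hequiv.
  split; [intros t; apply horizontal_ray_is_ray|].
  split; [intros t t'; apply Hequiv, horizontal_ray_is_ray|].
  split; [intros r Hr t; apply Hequiv, Hr|].
  intros t. split.
  - exists (@horizontal_ray T). split; [|apply horizontal_rays_disjoint].
    intros a. split; [apply horizontal_ray_is_ray | apply Hequiv, horizontal_ray_is_ray].
  - intros I F HF Hdisj. exact (disjoint_rays_inj (fun i => proj1 (HF i)) Hdisj).
Qed.
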